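(* Let $A$ be a metabelian Lie $U$-algebra over a field $k$ and let $x,y,z\in A$. Then (1) if $xyx=0$ and $xyy=0$, then $xy=0$; (2) if $xy=0$, $xz=0$ and $x\neq0$, then $yz=0$.
   Context: Products are left-normed: $xy=x\circ y$, $xyz=(x\circ y)\circ z$. A Lie algebra is metabelian if $(a\circ b)\circ(c\circ d)=0$ identically; $\mathrm{Fit}(A)$ is the ideal generated by all elements lying in nilpotent ideals of $A$. If $\mathrm{Fit}(A)$ is abelian, choose $\{a_\alpha:\alpha\in\Lambda\}\subseteq A$ whose images form a basis of $A/\mathrm{Fit}(A)$, let $R=k[x_\alpha:\alpha\in\Lambda]$, and make $\mathrm{Fit}(A)$ an $R$-module via $b\cdot x_\alpha=b\circ a_\alpha$ (extended multiplicatively and linearly). $A$ is a $U$-algebra if $\mathrm{Fit}(A)$ is abelian and a torsion-free $R$-module. *)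

From HB Require Import structures.
From mathcomp Require Import all_boot all_order all_algebra.
From mathcomp Require Import mpoly.
Set Implicit Arguments. Unset Strict Implicit. Unset Printing Implicit Defensive.
Import Order.TTheory GRing.Theory Num.Theory.
Local Open Scope ring_scope.

Section LieDefs.
Variables (k : fieldType) (A : lmodType k) (br : A -> A -> A).

Definition lie_algebra : Prop :=
  [/\ forall (c : k) u v w, br (c *: u + v) w = c *: br u w + br v w,
      forall (c : k) u v w, br w (c *: u + v) = c *: br w u + br w v,
      forall u, br u u = 0 &
      forall x y z, br (br x y) z + br (br y z) x + br (br z x) y = 0].

Definition metabelian : Prop :=
  forall a b c d, br (br a b) (br c d) = 0.

Definition is_ideal (J : A -> Prop) : Prop :=
  [/\ J 0,
      forall (c : k) u v, J u -> J v -> J (c *: u + v) &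
      forall u a, J u -> J (br u a)].

Definition lnprod (n : nat) (u : 'I_n.+1 -> A) : A :=
  foldl (fun acc (i : 'I_n.+1) => br acc (u i)) (u ord0) (behead (enum 'I_n.+1)).

Definition nilpotent_ideal (J : A -> Prop) : Prop :=
  is_ideal J /\
  exists n : nat, forall u : 'I_n.+1 -> A, (forall i, J (u i)) -> lnprod u = 0.

Definition in_nil_ideal (v : A) : Prop :=
  exists J, nilpotent_ideal J /\ J v.

(* Fit(A): the ideal generated by all elements lying in nilpotent ideals *)
Definition Fit (v : A) : Prop :=
  forall J, is_ideal J -> (forall u, in_nil_ideal u -> J u) -> J v.

(* the images of (a i)_{i : I} form a basis of A / Fit(A) *)
Definition basis_mod_Fit (I : Type) (a : I -> A) : Prop :=
  (forall v, exists (n : nat) (f : 'I_n -> I) (c : 'I_n -> k),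
       Fit (v - \sum_(i < n) c i *: a (f i))) /\
  (forall (n : nat) (f : 'I_n -> I) (c : 'I_n -> k), injective f ->
       Fit (\sum_(i < n) c i *: a (f i)) -> forall i, c i = 0).

(* action of the monomial x_{f 0}^{m 0} ... x_{f (n-1)}^{m (n-1)} on b *)
Definition act_mon (I : Type) (a : I -> A) (n : nat) (f : 'I_n -> I)
    (m : 'X_{1..n}) (b : A) : A :=
  foldl (fun v (i : 'I_n) => iter (m i) (fun w => br w (a (f i))) v) b (enum 'I_n).

Definition act_poly (I : Type) (a : I -> A) (n : nat) (f : 'I_n -> I)
    (p : {mpoly k[n]}) (b : A) : A :=
  \sum_(m <- msupp p) p@_m *: act_mon a f m b.

(* Fit(A) is a torsion-free R-module, R = k[x_i : i in I].  Every element of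
   R is a polynomial in finitely many distinct variables x_{f 0},...,x_{f(n-1)}. *)
Definition torsion_free (I : Type) (a : I -> A) : Prop :=
  forall (n : nat) (f : 'I_n -> I), injective f ->
  forall p : {mpoly k[n]}, p != 0 ->
  forall b, Fit b -> act_poly a f p b = 0 -> b = 0.

Definition Fit_abelian : Prop := forall u v, Fit u -> Fit v -> br u v = 0.

Definition U_algebra : Prop :=
  Fit_abelian /\
  exists (I : Type) (a : I -> A), basis_mod_Fit a /\ torsion_free a.

End LieDefs.

(** The derived algebra [A A] lies in Fit(A).  Let [b] be a nonzero element
    of Fit(A) and [y] an element with [b y = 0].  If [y] were not in Fit(A),
    write [y = sum d_j a_(g j) + f] with [f] in Fit(A), the [g j] distinct and
    some [d_j <> 0]; as Fit(A) is abelian, [b y = b . (sum d_j x_(g j))], so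
    torsion-freeness forces [b = 0].  Hence a nonzero element of Fit(A)
    annihilates only elements of Fit(A), and both statements follow from this,
    the abelianness of Fit(A) and, for (2), the Jacobi identity
    [(y z) x = 0]. *)

From mathcomp Require Import all_boot all_order all_algebra.
From mathcomp Require Import mpoly.
From Stdlib Require Import Classical.
Import GRing.Theory.
Set Implicit Arguments.
Local Open Scope ring_scope.

Section LieBracket.
Variables (k : fieldType) (A : lmodType k) (br : A -> A -> A).
Hypothesis HL : lie_algebra br.

Lemma br_linl c u v w : br (c *: u + v) w = c *: br u w + br v w.
Proof. by case: HL. Qed.

Lemma br_linr c u v w : br w (c *: u + v) = c *: br w u + br w v.
Proof. by case: HL. Qed.

Lemma br_alt u : br u u = 0.
Proof. by case: HL. Qed.

Lemma br_jacobi x y z : br (br x y) z + br (br y z) x + br (br z x) y = 0.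
Proof. by case: HL. Qed.

Lemma br_addl u v w : br (u + v) w = br u w + br v w.
Proof. by have := br_linl 1 u v w; rewrite !scale1r. Qed.

Lemma br_addr u v w : br w (u + v) = br w u + br w v.
Proof. by have := br_linr 1 u v w; rewrite !scale1r. Qed.

Lemma br0l w : br 0 w = 0.
Proof. by apply: (addrI (br 0 w)); rewrite -br_addl !addr0. Qed.

Lemma br0r w : br w 0 = 0.
Proof. by apply: (addrI (br w 0)); rewrite -br_addr !addr0. Qed.

Lemma br_anti u v : br u v = - br v u.
Proof.
apply/eqP; rewrite -addr_eq0; apply/eqP.
have := br_alt (u + v).
by rewrite br_addl !br_addr !br_alt add0r addr0.
Qed.

Lemma br_sumr b m (d : 'I_m -> k) (v : 'I_m -> A) :
  br b (\sum_(j < m) d j *: v j) = \sum_(j < m) d j *: br b (v j).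
Proof.
elim/big_rec2: _ => [|j x y _ IH]; first exact: br0r.
by rewrite br_linr IH.
Qed.

End LieBracket.

Lemma foldl_iter_delta (T : eqType) (X : Type) (F : T -> X -> X) (e : T -> nat)
    (j : T) (s : seq T) (b : X) :
  (forall i, e i = (j == i) :> nat) -> uniq s ->
  foldl (fun v i => iter (e i) (F i) v) b s = if j \in s then F j b else b.
Proof.
move=> He; elim: s b => [|x s IH] b //= /andP[xs us].
rewrite IH // He in_cons.
by case: (eqVneq j x) => [->|] //=; rewrite (negbTE xs).
Qed.

Section PolynomialAction.
Variables (k : fieldType) (A : lmodType k) (br : A -> A -> A).
Variables (I : Type) (a : I -> A) (n : nat) (f : 'I_n -> I).

Lemma act_monU j b : act_mon br a f U_(j)%MM b = br b (a (f j)).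
Proof.
rewrite /act_mon (@foldl_iter_delta _ _ (fun i w => br w (a (f i))) _ j).
- by rewrite mem_enum.
- by move=> i; rewrite mnm1E.
- exact: enum_uniq.
Qed.

Lemma act_poly_over (s : seq 'X_{1..n}) p b :
  uniq s -> {subset msupp p <= s} ->
  act_poly br a f p b = \sum_(m <- s) p@_m *: act_mon br a f m b.
Proof.
move=> us Hs; rewrite /act_poly [RHS](bigID (mem (msupp p))) /=.
rewrite [X in _ = _ + X]big1 ?addr0; last first.
  by move=> m /memN_msupp_eq0 ->; rewrite scale0r.
rewrite -[RHS]big_filter; apply: perm_big.
apply: uniq_perm; [exact: msupp_uniq | exact: filter_uniq |].
by move=> m; rewrite mem_filter; case E: (m \in msupp p) => //=; rewrite Hs.
Qed.

Lemma act_poly_lin c p q b :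
  act_poly br a f (c *: p + q) b = c *: act_poly br a f p b + act_poly br a f q b.
Proof.
set s := undup (msupp p ++ msupp q ++ msupp (c *: p + q)).
rewrite !(@act_poly_over s) ?undup_uniq //;
  try by move=> m h; rewrite mem_undup !mem_cat h ?orbT.
rewrite scaler_sumr -big_split /=; apply: eq_bigr => m _.
by rewrite mcoeffD mcoeffZ scalerDl scalerA.
Qed.

Lemma act_polyX j b : act_poly br a f 'X_j b = br b (a (f j)).
Proof. by rewrite /act_poly msuppX big_seq1 mcoeffX eqxx scale1r act_monU. Qed.

Lemma act_poly_linear_form (d : 'I_n -> k) b :
  act_poly br a f (\sum_(j < n) d j *: 'X_j) b = \sum_(j < n) d j *: br b (a (f j)).
Proof.
elim/big_rec2: _ => [|j p x _ IH]; first by rewrite /act_poly msupp0 big_nil.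
by rewrite act_poly_lin act_polyX IH.
Qed.

End PolynomialAction.

Lemma linear_form_eq0 (k : fieldType) n (d : 'I_n -> k) :
  (\sum_(j < n) d j *: 'X_j : {mpoly k[n]}) = 0 -> forall j, d j = 0.
Proof.
move=> h j0; have := congr1 (mcoeff U_(j0)%MM) h.
rewrite mcoeff0 raddf_sum (bigD1 j0) //= big1 ?addr0.
  by rewrite mcoeffZ mcoeffXU eqxx mulr1.
by move=> j nj; rewrite mcoeffZ mcoeffXU (negbTE nj) mulr0.
Qed.

(* Merging the terms with equal index needs equality on [I] to be decidable,
   which is only available classically. *)
Lemma lincomb_injective_index (k : fieldType) (A : lmodType k) (I : Type)
    (a : I -> A) n (f : 'I_n -> I) (c : 'I_n -> k) :
  exists m (g : 'I_m -> I) (d : 'I_m -> k),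
    injective g /\ \sum_(i < n) c i *: a (f i) = \sum_(j < m) d j *: a (g j).
Proof.
elim: n f c => [|n IH] f c.
  by exists 0%N, f, c; split => // -[].
rewrite big_ord_recl.
have [m [g [d [inj_g ->]]]] := IH (fun i => f (lift ord0 i)) (fun i => c (lift ord0 i)).
case: (classic (exists j, g j = f ord0)) => [[j0 gj0]|new_f0].
  exists m, g, (fun j => d j + (j == j0)%:R * c ord0); split => //.
  rewrite -gj0 [RHS](eq_bigr (fun j => d j *: a (g j) + (j == j0)%:R * c ord0 *: a (g j)));
    last by move=> j _; rewrite scalerDl.
  rewrite big_split /= addrC; congr (_ + _).
  rewrite (bigD1 j0) //= eqxx mul1r big1 ?addr0 // => j /negbTE->.
  by rewrite mul0r scale0r.
exists m.+1, (fun j => oapp g (f ord0) (unlift ord0 j)),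
  (fun j => oapp d (c ord0) (unlift ord0 j)); split.
  move=> j1 j2.
  case: (unliftP ord0 j1) => [j1'|] ->; case: (unliftP ord0 j2) => [j2'|] -> //=.
  - by move/inj_g ->.
  - by move=> h; case: new_f0; exists j1'.
  - by move=> h; case: new_f0; exists j2'.
rewrite big_ord_recl unlift_none /=; congr (_ + _).
by apply: eq_bigr => j _; rewrite liftK.
Qed.

Section FittingIdeal.
Variables (k : fieldType) (A : lmodType k) (br : A -> A -> A).
Hypothesis HL : lie_algebra br.
Hypothesis HM : metabelian br.

Definition centralizes_derived (w : A) := forall x y, br w (br x y) = 0.

(* The annihilator of the centralizer of [A A]: an ideal of square zero that
   contains all brackets, which avoids speaking about the span of [A A]. *)
Definition kills_centralizer (v : A) :=
  forall w, centralizes_derived w -> br v w = 0.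

Lemma kills_centralizer_br x y : kills_centralizer (br x y).
Proof. by move=> w Cw; rewrite br_anti // Cw oppr0. Qed.

Lemma kills_centralizer_ideal : is_ideal br kills_centralizer.
Proof.
split.
- by move=> w _; rewrite br0l.
- by move=> c u v Du Dv w Cw; rewrite br_linl // Du // Dv // scaler0 addr0.
move=> u x Du w Cw.
have := br_jacobi HL u x w.
have -> : br w u = 0 by rewrite br_anti // Du // oppr0.
have -> : br (br x w) u = 0 by rewrite br_anti // Du ?oppr0 // => c d; apply: HM.
by rewrite br0l // !addr0.
Qed.

Lemma kills_centralizer_nilpotent : nilpotent_ideal br kills_centralizer.
Proof.
split; first exact: kills_centralizer_ideal.
exists 1%N => u Du.
rewrite /lnprod enum_ordSl /= enum_ordSl enum_ord0 /=.
by apply: (Du ord0) => c d; apply: (Du _) => x1 y1; apply: HM.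
Qed.

Lemma Fit_br x y : Fit br (br x y).
Proof.
move=> J _ HJ; apply: HJ; exists kills_centralizer.
by split; [exact: kills_centralizer_nilpotent | exact: kills_centralizer_br].
Qed.

End FittingIdeal.

Lemma U_algebra_Fit_of_annihilated (k : fieldType) (A : lmodType k)
    (br : A -> A -> A) :
  lie_algebra br -> U_algebra br ->
  forall b y, Fit br b -> b != 0 -> br b y = 0 -> Fit br y.
Proof.
move=> HL [Fab [I [a [[span_a _] torsion_free_a]]]] b y Fb nz_b by0.
apply: NNPP => nFy; case/eqP: nz_b.
have [n [f [c]]] := span_a y.
have [m [g [d [inj_g ->]]]] := @lincomb_injective_index _ _ _ a _ f c.
set ly := \sum_(j < m) d j *: a (g j) => Fy_ly.
have [/linear_form_eq0 d0 | nz_l] := eqVneq (\sum_(j < m) d j *: 'X_j) 0.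
  by case: nFy; rewrite /ly big1 ?subr0 // in Fy_ly => j _; rewrite d0 scale0r.
apply: (torsion_free_a m g inj_g _ nz_l b Fb).
rewrite act_poly_linear_form -br_sumr // -/ly.
by rewrite -by0 -[in RHS](subrK ly y) br_addr // (Fab _ _ Fb Fy_ly) add0r.
Qed.

Theorem theorem3p2p4 (k : fieldType) (A : lmodType k) (br : A -> A -> A) :
  lie_algebra br -> metabelian br -> U_algebra br ->
  forall x y z : A,
    (br (br x y) x = 0 -> br (br x y) y = 0 -> br x y = 0) /\
    (br x y = 0 -> br x z = 0 -> x != 0 -> br y z = 0).
Proof.
move=> HL HM HU x y z.
have Fab := HU.1; have Fit_ann := U_algebra_Fit_of_annihilated HL HU.
split=> [xyx0 xyy0 | xy0 xz0 nz_x].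
  have [//|nz_xy] := eqVneq (br x y) 0.
  have Fxy := Fit_br HL HM x y.
  by case/eqP: (nz_xy); apply: Fab; [exact: Fit_ann xyx0 | exact: Fit_ann xyy0].
case: (classic (Fit br x)) => [Fx | nFx].
  by apply: Fab; [exact: Fit_ann Fx nz_x xy0 | exact: Fit_ann Fx nz_x xz0].
have [//|nz_yz] := eqVneq (br y z) 0.
case: nFx; apply: Fit_ann (Fit_br HL HM y z) nz_yz _.
have := br_jacobi HL y z x.
by rewrite [br z x]br_anti // xz0 xy0 oppr0 !br0l // !addr0.
Qed.
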